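(* Let $(M,\cdot,1)$ be a monoid, $\Sigma$ a finite alphabet, $\ell\in L$ and $(g,f)$ a factorization on $L$. Suppose the set $Q^{(g,f)}_\ell=\{S^{(g,f)}_\alpha(\ell)\mid\alpha\in\Sigma^*\}$ is finite (so that $N^{(g,f)}(\ell,1)$ is an $M$-DFA). Then for every $m\in M$ the $M$-DFA $N^{(g,f)}(\ell,m)$ satisfies: 1. it recognizes $m\cdot\ell$; 2. it is accessible; 3. each state $S^{(g,f)}_\alpha(\ell)\in Q^{(g,f)}_\ell$ is a recognizable $M$-language; 4. for each state $q=S^{(g,f)}_\alpha(\ell)$, the state language $\mathcal{N}_q$ of $N^{(g,f)}(\ell,m)$ equals $S^{(g,f)}_\alpha(\ell)$; 5. for all states $p,q$ of $N^{(g,f)}(\ell,m)$, $\mathcal{N}_p=\mathcal{N}_q$ implies $p=q$.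
   Context: $L$ is the set of all functions $\Sigma^*\to M$; $\varepsilon$ the empty word; $(m\cdot\ell)(\gamma)=m\cdot\ell(\gamma)$; $\Delta_\alpha(\ell)(\gamma)=\ell(\alpha\gamma)$. A factorization on $L$ is a pair of functions $g:L\to M$, $f:L\to L$ with $g(\ell)\cdot f(\ell)=\ell$ for all $\ell$. Define $S^{(g,f)}_\varepsilon=\mathrm{id}_L$, $S^{(g,f)}_{\alpha\sigma}=f\circ\Delta_\sigma\circ S^{(g,f)}_\alpha$ ($\sigma\in\Sigma$). An $M$-DFA is $(Q,\Sigma,u,i_u,\delta,w,\rho)$ with $Q$ finite nonempty, initial state $u$, initial value $i_u\in M$, $\delta:Q\times\Sigma\to Q$, $w:Q\times\Sigma\to M$, $\rho:Q\to M$; with $q\alpha$ the extended transition and $w^*(q,\varepsilon)=1$, $w^*(q,\alpha\sigma)=w^*(q,\alpha)\cdot w(q\alpha,\sigma)$, it recognizes $\alpha\mapsto i_u\cdot w^*(u,\alpha)\cdot\rho(u\alpha)$, and the language of state $q$ is $\alpha\mapsto w^*(q,\alpha)\cdot\rho(q\alpha)$. Recognizable means recognized by some $M$-DFA; accessible means every state is $u\alpha$ for some word $\alpha$. The automaton $N^{(g,f)}(\ell,m)$ has state set $Q^{(g,f)}_\ell$, initial state $S^{(g,f)}_\varepsilon(\ell)=\ell$, initial value $m$, transitions $\delta(S^{(g,f)}_\alpha(\ell),\sigma)=S^{(g,f)}_{\alpha\sigma}(\ell)$, monoid-transition values $w(S^{(g,f)}_\alpha(\ell),\sigma)=g(\Delta_\sigma(S^{(g,f)}_\alpha(\ell)))$,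 and final values $\rho(S^{(g,f)}_\alpha(\ell))=(S^{(g,f)}_\alpha(\ell))(\varepsilon)$. *)

From Stdlib Require List.
From mathcomp Require Import all_boot.
Set Implicit Arguments. Unset Strict Implicit. Unset Printing Implicit Defensive.

Section MLang.
Variables (Sigma : finType) (M : Type) (mul : M -> M -> M) (one : M).

Definition lang := seq Sigma -> M.

Definition lscale (m : M) (l : lang) : lang := fun gamma => mul m (l gamma).

Definition Delta (alpha : seq Sigma) (l : lang) : lang := fun gamma => l (alpha ++ gamma).

Definition factorization (g : lang -> M) (f : lang -> lang) : Prop :=
  forall l, lscale (g l) (f l) = l.

Definition Sgf (f : lang -> lang) (alpha : seq Sigma) (l : lang) : lang :=
  foldl (fun k s => f (Delta [:: s] k)) l alpha.

Lemma Sgf_rcons f alpha s l : Sgf f (rcons alpha s) l = f (Delta [:: s] (Sgf f alpha l)).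
Proof. by rewrite /Sgf -cats1 foldl_cat. Qed.

(* Deterministic M-weighted automata (state type arbitrary; finiteness separate) *)
Record DFA := {
  st : Type;
  init : st;
  ival : M;
  delta : st -> Sigma -> st;
  wt : st -> Sigma -> M;
  rho : st -> M }.

Definition finite_states (A : DFA) : Prop :=
  exists s : seq (st A), forall q : st A, List.In q s.

Definition ext (A : DFA) (q : st A) (alpha : seq Sigma) : st A := foldl (delta (d:=A)) q alpha.

(* w*(q, eps) = 1, w*(q, alpha sigma) = w*(q, alpha) . w(q alpha, sigma) *)
Definition wstar (A : DFA) (q : st A) (alpha : seq Sigma) : M :=
  (foldl (fun (p : st A * M) s => (delta p.1 s, mul p.2 (wt p.1 s))) (q, one) alpha).2.

Definition recognized (A : DFA) : lang :=
  fun alpha => mul (mul (ival A) (wstar (init A) alpha)) (rho (ext (init A) alpha)).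

Definition state_lang (A : DFA) (q : st A) : lang :=
  fun alpha => mul (wstar q alpha) (rho (ext q alpha)).

Definition recognizable (l : lang) : Prop :=
  exists A : DFA, finite_states A /\ recognized A = l.

Definition accessible (A : DFA) : Prop :=
  forall q : st A, exists alpha, q = ext (init A) alpha.

Definition Qgf (f : lang -> lang) (l : lang) : Type :=
  {k : lang | exists alpha, k = Sgf f alpha l}.

Definition Qgf_state (f : lang -> lang) (l : lang) (alpha : seq Sigma) : Qgf f l :=
  exist _ (Sgf f alpha l) (ex_intro _ alpha erefl).

Lemma Qgf_step (f : lang -> lang) (l : lang) (q : Qgf f l) (s : Sigma) :
  exists alpha, f (Delta [:: s] (sval q)) = Sgf f alpha l.
Proof.
case: q => k [alpha Hk] /=; exists (rcons alpha s); by rewrite Sgf_rcons Hk.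
Qed.

Definition Ngf_delta (f : lang -> lang) (l : lang) (q : Qgf f l) (s : Sigma) : Qgf f l :=
  exist _ (f (Delta [:: s] (sval q))) (Qgf_step q s).

Definition Ngf (g : lang -> M) (f : lang -> lang) (l : lang) (m : M) : DFA :=
  {| st := Qgf f l;
     init := Qgf_state f l [::];
     ival := m;
     delta := @Ngf_delta f l;
     wt := fun q s => g (Delta [:: s] (sval q));
     rho := fun q => sval q [::] |}.

End MLang.

(* The factorization identity k = g(k) . f(k), applied to k = Delta_s(q), shows by
   induction on words that the language of every state q of N(l, m) is q itself:
   N_q(s alpha) = g(Delta_s q) . N_{f(Delta_s q)}(alpha) = g(Delta_s q) . f(Delta_s q)(alpha)
   = q(s alpha).  Hence N(l, m) recognizes m . l, distinct states have distinct languages,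
   and S_alpha(l) is recognized by N(S_alpha(l), 1), whose states
   S_beta(S_alpha(l)) = S_(alpha beta)(l) again form a finite set. *)
From Stdlib Require List.
From Stdlib Require Import ProofIrrelevance ClassicalEpsilon FunctionalExtensionality.
From mathcomp Require Import all_boot.

Set Implicit Arguments. Unset Strict Implicit. Unset Printing Implicit Defensive.

Lemma sval_inj_prop (T : Type) (P : T -> Prop) : injective (@proj1_sig T P).
Proof. by move=> u v; apply: eq_sig_hprop => x; apply: proof_irrelevance. Qed.

Lemma sig_listed (T : Type) (P : T -> Prop) (y0 : {x | P x}) (s : seq T) :
  (forall x, P x -> List.In x s) -> exists s' : seq {x | P x}, forall y, List.In y s'.
Proof.
move=> Ps.
pose lift x := if excluded_middle_informative (P x) is left Px then exist P x Px else y0.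
exists (map lift s) => -[x Px].
have -> : exist P x Px = lift x.
  by rewrite /lift; case: excluded_middle_informative => // Px'; apply: sval_inj_prop.
exact/List.in_map/Ps.
Qed.

Section WeightedDFA.
Variables (Sigma : finType) (M : Type) (mul : M -> M -> M) (one : M).
Hypotheses (mulA : associative mul) (mul1m : left_id one mul) (mulm1 : right_id one mul).

Lemma lscale1 (k : lang Sigma M) : lscale mul one k = k.
Proof. by apply: functional_extensionality => alpha; rewrite /lscale mul1m. Qed.

Lemma foldl_wstar (A : DFA Sigma M) (p : st A) (x : M) (alpha : seq Sigma) :
  foldl (fun (p : st A * M) s => (delta p.1 s, mul p.2 (wt p.1 s))) (p, x) alpha
  = (ext p alpha, mul x (wstar mul one p alpha)).
Proof.
elim: alpha p x => [|s alpha IH] p x /=; first by rewrite /ext /wstar /= mulm1.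
by rewrite /wstar /= !IH /= mul1m mulA.
Qed.

Lemma wstar_cons (A : DFA Sigma M) (p : st A) (s : Sigma) (alpha : seq Sigma) :
  wstar mul one p (s :: alpha) = mul (wt p s) (wstar mul one (delta p s) alpha).
Proof. by rewrite /wstar /= foldl_wstar /= mul1m. Qed.

Lemma state_lang_nil (A : DFA Sigma M) (q : st A) : state_lang mul one q [::] = rho q.
Proof. by rewrite /state_lang /wstar /= mul1m. Qed.

Lemma state_lang_cons (A : DFA Sigma M) (q : st A) (s : Sigma) (alpha : seq Sigma) :
  state_lang mul one q (s :: alpha) = mul (wt q s) (state_lang mul one (delta q s) alpha).
Proof. by rewrite /state_lang wstar_cons -mulA. Qed.

Lemma recognizedE (A : DFA Sigma M) :
  recognized mul one A = lscale mul (ival A) (state_lang mul one (init A)).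
Proof. by apply: functional_extensionality => alpha; rewrite /recognized -mulA. Qed.

End WeightedDFA.

Section QuotientAutomaton.
Variables (Sigma : finType) (M : Type) (mul : M -> M -> M) (one : M).
Hypotheses (mulA : associative mul) (mul1m : left_id one mul) (mulm1 : right_id one mul).
Variables (g : lang Sigma M -> M) (f : lang Sigma M -> lang Sigma M).
Hypothesis hfact : factorization mul g f.

Lemma Sgf_cat (alpha beta : seq Sigma) (l : lang Sigma M) :
  Sgf f (alpha ++ beta) l = Sgf f beta (Sgf f alpha l).
Proof. exact: foldl_cat. Qed.

Lemma Ngf_ext (l : lang Sigma M) (m : M) (q : st (Ngf g f l m)) (alpha : seq Sigma) :
  sval (ext q alpha) = Sgf f alpha (sval q).
Proof. by elim: alpha q => [|s alpha IH] q //=; rewrite /ext /= -IH. Qed.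

Lemma Ngf_state_lang (l : lang Sigma M) (m : M) (q : st (Ngf g f l m)) :
  state_lang mul one q = sval q.
Proof.
apply: functional_extensionality => alpha.
elim: alpha q => [|s alpha IH] q; first exact: state_lang_nil.
rewrite state_lang_cons // IH.
exact: (f_equal (fun k => k alpha) (hfact (Delta [:: s] (sval q)))).
Qed.

Lemma Ngf_state_lang_inj (l : lang Sigma M) (m : M) :
  injective (state_lang mul one (A := Ngf g f l m)).
Proof. by move=> p q; rewrite !Ngf_state_lang; apply: sval_inj_prop. Qed.

Lemma Ngf_recognized (l : lang Sigma M) (m : M) :
  recognized mul one (Ngf g f l m) = lscale mul m l.
Proof. by rewrite recognizedE // Ngf_state_lang. Qed.

Lemma Ngf_accessible (l : lang Sigma M) (m : M) : accessible (Ngf g f l m).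
Proof.
move=> [k [alpha k_eq]]; exists alpha; apply: sval_inj_prop.
by rewrite Ngf_ext.
Qed.

Lemma Ngf_finite (l : lang Sigma M) (m : M) (s : seq (lang Sigma M)) :
  (forall alpha, List.In (Sgf f alpha l) s) -> finite_states (Ngf g f l m).
Proof.
by move=> hs; apply: (sig_listed (init (Ngf g f l m)) (s := s)) => _ [alpha ->].
Qed.

Lemma Sgf_recognizable (l : lang Sigma M) (s : seq (lang Sigma M)) (alpha : seq Sigma) :
  (forall beta, List.In (Sgf f beta l) s) -> recognizable mul one (Sgf f alpha l).
Proof.
move=> hs; exists (Ngf g f (Sgf f alpha l) one); split.
  by apply: Ngf_finite => beta; rewrite -Sgf_cat; apply: hs.
by rewrite Ngf_recognized lscale1.
Qed.

End QuotientAutomaton.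

Theorem mainTheorem10 (M : Type) (mul : M -> M -> M) (one : M)
  (mulA : associative mul) (mul1m : left_id one mul) (mulm1 : right_id one mul)
  (Sigma : finType) (l : lang Sigma M)
  (g : lang Sigma M -> M) (f : lang Sigma M -> lang Sigma M)
  (hfact : factorization mul g f)
  (hfin : exists s : seq (lang Sigma M), forall alpha, List.In (Sgf f alpha l) s) :
  forall m : M,
    let N := Ngf g f l m in
    finite_states N /\
    recognized mul one N = lscale mul m l /\
    accessible N /\
    (forall alpha, recognizable mul one (Sgf f alpha l)) /\
    (forall (q : st N) alpha, sval q = Sgf f alpha l -> state_lang mul one q = Sgf f alpha l) /\
    (forall p q : st N, state_lang mul one p = state_lang mul one q -> p = q).
Proof.
move=> m N; have [s hs] := hfin.
split; first exact: Ngf_finite hs.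
split; first exact: Ngf_recognized.
split; first exact: Ngf_accessible.
split; first by move=> alpha; apply: Sgf_recognizable hs.
split; first by move=> q alpha <-; apply: Ngf_state_lang.
exact: Ngf_state_lang_inj.
Qed.
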